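(* Let $\sigma\in\operatorname{Hom}(\pi_1(M),\mathrm{SU}(2))$, let $(x,y,z)=(\operatorname{tr}\sigma(X),\operatorname{tr}\sigma(Y),\operatorname{tr}\sigma(XY))$ and $k=\operatorname{tr}\sigma(K)$. Then $[\sigma]$ is a $\mathrm{Pin}(2)$ representation class but not a $\mathrm{Spin}(2)$ representation class if and only if $k\ne 2$ and at least two of $x,y,z$ are zero.
   Context: $M$ is a torus with one boundary component; $\pi_1(M)$ is the free group on $X,Y$ and $K=XYX^{-1}Y^{-1}$. One has $k=x^2+y^2+z^2-xyz-2$. Use the quaternionic model of $\mathrm{SU}(2)$: $1,\mathrm{i},\mathrm{j},\mathrm{k}$ denote the matrices $\begin{pmatrix}1&0\\0&1\end{pmatrix},\begin{pmatrix}i&0\\0&-i\end{pmatrix},\begin{pmatrix}0&1\\-1&0\end{pmatrix},\begin{pmatrix}0&i\\i&0\end{pmatrix}$. Set $\mathrm{Spin}(2)=\{\cos\theta+\sin\theta\,\mathrm{j}\}$, $\mathrm{Spin}_-(2)=\{\cos\theta\,\mathrm{k}+\sin\theta\,\mathrm{i}\}$, $\mathrm{Pin}(2)=\mathrm{Spin}(2)\cup\mathrm{Spin}_-(2)$ (the preimage of $\mathrm{O}(2)$ under $\mathrm{SU}(2)\to\mathrm{SO}(3)$). For a subgroup $G\subset\mathrm{SU}(2)$, a class $[\sigma]\in E=\operatorname{Hom}(\pi_1(M),\mathrm{SU}(2))/\mathrm{SU}(2)$ is a $G$ representation class if some representative of $[\sigma]$ takes values in $G$ (equivalently $\sigma(\pi_1(M))$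 lies in a conjugate of $G$). Classes are determined by their trace coordinates $(x,y,z)$. *)

From HB Require Import structures.
From mathcomp Require Import all_boot all_order all_algebra.
From mathcomp Require Import complex.
From mathcomp Require Import reals trigo.
Set Implicit Arguments. Unset Strict Implicit. Unset Printing Implicit Defensive.
Import Order.TTheory GRing.Theory Num.Theory.
Local Open Scope ring_scope.
Local Open Scope complex_scope.

Section SU2.
Variable R : realType.
Local Notation C := R[i].

Definition adjmx (A : 'M[C]_2) : 'M[C]_2 := (map_mx Num.conj A)^T.

Definition SU2 : pred 'M[C]_2 :=
  fun A => (A *m adjmx A == 1%:M) && (\det A == 1).

Definition qI : 'M[C]_2 := \matrix_(a < 2, b < 2)
  (if (a == b) then (if a == 0 :> nat then 'i else - 'i) else 0).
Definition qJ : 'M[C]_2 := \matrix_(a < 2, b < 2)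
  (if (a == b) then 0 else (if a == 0 :> nat then 1 else -1)).
Definition qK : 'M[C]_2 := \matrix_(a < 2, b < 2)
  (if (a == b) then 0 else 'i).

Definition Spin2 (A : 'M[C]_2) : Prop :=
  exists t : R, A = (cos t)%:C%:M + (sin t)%:C *: qJ.
Definition Spinm2 (A : 'M[C]_2) : Prop :=
  exists t : R, A = (cos t)%:C *: qK + (sin t)%:C *: qI.
Definition Pin2 (A : 'M[C]_2) : Prop := Spin2 A \/ Spinm2 A.

(* Words in the free group pi_1(M) = F(X, Y) *)
Inductive word := wX | wY | w1 | wmul of word & word | winv of word.

(* A homomorphism pi_1(M) -> SU(2) is determined by the images A, B of X, Y
   (any pair in SU(2) gives one); evaluate it on a word. *)
Fixpoint rep_eval (A B : 'M[C]_2) (w : word) : 'M[C]_2 :=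
  match w with
  | wX => A | wY => B | w1 => 1%:M
  | wmul u v => rep_eval A B u *m rep_eval A B v
  | winv u => invmx (rep_eval A B u)
  end.

Definition rep_class_in (G : 'M[C]_2 -> Prop) (A B : 'M[C]_2) : Prop :=
  exists g, SU2 g /\ forall w, G (g *m rep_eval A B w *m invmx g).

Definition wK : word := wmul (wmul wX wY) (wmul (winv wX) (winv wY)).

End SU2.

From HB Require Import structures.
From mathcomp Require Import all_boot all_order all_algebra.
From mathcomp Require Import complex.
From mathcomp Require Import reals trigo.
From mathcomp Require Import ring lra.

(* In the quaternion model a homomorphism is a pair (p, q) of unit quaternions,
   traces are twice real parts, and the trace of the commutator is
   2 (1 - 2 |Im p x Im q|^2).  Hence k = 2 exactly when the imaginary parts are
   parallel, and then one rotation moves their common axis onto j, giving a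
   Spin(2) class.  Elements of Spin_-(2) are pure, and Spin(2) Spin_-(2) lies in
   Spin_-(2), so a Pin(2) class that is not a Spin(2) class has two pure members
   among p, q, pq.  Conversely two pure unit quaternions with non-parallel
   imaginary parts are rotated into the i,k-plane, i.e. into Spin_-(2), by the
   rotation moving their cross product onto j; the cases involving pq reduce to
   this one since q = p^-1 (pq) and p = (pq) q^-1. *)

Set Implicit Arguments.
Unset Strict Implicit.
Unset Printing Implicit Defensive.
Import Order.TTheory GRing.Theory Num.Theory.
Local Open Scope ring_scope.

Section Quaternions.
Variable R : realType.

Record quat := Quat { qre : R; qi : R; qj : R; qk : R }.

Definition qzero := Quat 0 0 0 0.
Definition qone := Quat 1 0 0 0.

Definition qmul (p q : quat) :=
  let: Quat a b c d := p in let: Quat a' b' c' d' := q in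
  Quat (a * a' - b * b' - c * c' - d * d') (a * b' + b * a' + c * d' - d * c')
       (a * c' - b * d' + c * a' + d * b') (a * d' + b * c' - c * b' + d * a').
Definition qconj (p : quat) := let: Quat a b c d := p in Quat a (- b) (- c) (- d).
Definition qscale (l : R) (p : quat) :=
  let: Quat a b c d := p in Quat (l * a) (l * b) (l * c) (l * d).
Definition qnorm2 (p : quat) := let: Quat a b c d := p in a ^+ 2 + b ^+ 2 + c ^+ 2 + d ^+ 2.

Definition vdot (p q : quat) := qi p * qi q + qj p * qj q + qk p * qk q.
Definition vcross (p q : quat) :=
  Quat 0 (qj p * qk q - qk p * qj q) (qk p * qi q - qi p * qk q) (qi p * qj q - qj p * qi q).

Definition qconjby (h v : quat) := qmul (qmul h v) (qconj h).
Definition qcomm (p q : quat) := qmul (qmul p q) (qmul (qconj p) (qconj q)).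

Lemma qmulA p q r : qmul (qmul p q) r = qmul p (qmul q r).
Proof. by case: p q r => a b c d [a' b' c' d'] [a'' b'' c'' d''] /=; congr Quat; ring. Qed.
Lemma qmul1 p : qmul p qone = p.
Proof. by case: p => a b c d /=; congr Quat; ring. Qed.
Lemma qmul1l p : qmul qone p = p.
Proof. by case: p => a b c d /=; congr Quat; ring. Qed.
Lemma qconjK p : qconj (qconj p) = p.
Proof. by case: p => a b c d /=; rewrite !opprK. Qed.
Lemma qconjM p q : qconj (qmul p q) = qmul (qconj q) (qconj p).
Proof. by case: p q => a b c d [a' b' c' d'] /=; congr Quat; ring. Qed.
Lemma qnorm2M p q : qnorm2 (qmul p q) = qnorm2 p * qnorm2 q.
Proof. by case: p q => a b c d [a' b' c' d'] /=; ring. Qed.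
Lemma qnorm2_conj p : qnorm2 (qconj p) = qnorm2 p.
Proof. by case: p => a b c d /=; ring. Qed.
Lemma qnorm2_scale l p : qnorm2 (qscale l p) = l ^+ 2 * qnorm2 p.
Proof. by case: p => a b c d /=; ring. Qed.
Lemma qnorm2_ge0 p : 0 <= qnorm2 p.
Proof. by case: p => a b c d /=; rewrite !addr_ge0 ?sqr_ge0. Qed.
Lemma qnorm2_eq0 p : qnorm2 p = 0 -> p = qzero.
Proof.
case: p => a b c d /= h.
have sq0 (x : R) : x ^+ 2 = 0 -> x = 0 by move/eqP; rewrite sqrf_eq0 => /eqP.
by congr Quat; apply: sq0; nra.
Qed.
Lemma qmul_conj p : qnorm2 p = 1 -> qmul p (qconj p) = qone.
Proof. by case: p => a b c d /= hn; rewrite /qone -hn; congr Quat; ring. Qed.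
Lemma qmul_conjl p : qnorm2 p = 1 -> qmul (qconj p) p = qone.
Proof. by case: p => a b c d /= hn; rewrite /qone -hn; congr Quat; ring. Qed.

Lemma qre_comm p q : qre (qcomm p q) = qnorm2 p * qnorm2 q - 2 * qnorm2 (vcross p q).
Proof. by case: p q => a b c d [a' b' c' d'] /=; ring. Qed.

Lemma qconjby_pure n v : qre n = 0 ->
  qconjby n v = Quat (qnorm2 n * qre v) (2 * vdot n v * qi n - qnorm2 n * qi v)
    (2 * vdot n v * qj n - qnorm2 n * qj v) (2 * vdot n v * qk n - qnorm2 n * qk v).
Proof. by case: n v => a b c d [a' b' c' d'] /= ->; rewrite /vdot /=; congr Quat; ring. Qed.

Lemma qconjbyM h u v : qnorm2 h = 1 ->
  qconjby h (qmul u v) = qmul (qconjby h u) (qconjby h v).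
Proof.
move=> hn; rewrite /qconjby -!qmulA; congr qmul; rewrite !qmulA; congr qmul.
by rewrite -[in LHS](qmul1 u) -(qmul_conjl hn) !qmulA.
Qed.
Lemma qconjby_conj h v : qconjby h (qconj v) = qconj (qconjby h v).
Proof. by rewrite /qconjby !qconjM qconjK qmulA. Qed.
Lemma qconjby1 h : qnorm2 h = 1 -> qconjby h qone = qone.
Proof. by move=> hn; rewrite /qconjby qmul1 qmul_conj. Qed.
Lemma qconjby_comm h p q : qnorm2 h = 1 ->
  qconjby h (qcomm p q) = qcomm (qconjby h p) (qconjby h q).
Proof. by move=> hn; rewrite /qcomm !qconjbyM // !qconjby_conj. Qed.
Lemma qconjby_scale l h v : qconjby (qscale l h) v = qscale (l ^+ 2) (qconjby h v).
Proof. by case: h v => a b c d [a' b' c' d'] /=; congr Quat; ring. Qed.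
Lemma qre_qconjby h v : qre (qconjby h v) = qnorm2 h * qre v.
Proof. by case: h v => a b c d [a' b' c' d'] /=; ring. Qed.
Lemma qre_qconjby_unit h v : qnorm2 h = 1 -> qre (qconjby h v) = qre v.
Proof. by move=> hn; rewrite qre_qconjby hn mul1r. Qed.
Lemma qnorm2_qconjby h v : qnorm2 (qconjby h v) = qnorm2 h ^+ 2 * qnorm2 v.
Proof. by rewrite /qconjby !qnorm2M qnorm2_conj; ring. Qed.

Definition spinq (v : quat) := qi v = 0 /\ qk v = 0.
Definition spinmq (v : quat) := qre v = 0 /\ qj v = 0.
Definition pinq (v : quat) := spinq v \/ spinmq v.

Lemma spinq1 : spinq qone. Proof. by []. Qed.
Lemma spinq_conj v : spinq v -> spinq (qconj v).
Proof. by case: v => a b c d [/= -> ->]; rewrite /spinq /= oppr0. Qed.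
Lemma spinmq_conj v : spinmq v -> spinmq (qconj v).
Proof. by case: v => a b c d [/= -> ->]; rewrite /spinmq /= oppr0. Qed.
Lemma spinq_scale l v : spinq v -> spinq (qscale l v).
Proof. by case: v => a b c d [/= -> ->]; rewrite /spinq /= mulr0. Qed.
Lemma spinmq_scale l v : spinmq v -> spinmq (qscale l v).
Proof. by case: v => a b c d [/= -> ->]; rewrite /spinmq /= mulr0. Qed.

Lemma spinqM u v : spinq u -> spinq v -> spinq (qmul u v).
Proof.
case: u v => a b c d [a' b' c' d'] [/= -> ->] [/= -> ->].
by rewrite /spinq /spinmq /=; split; ring.
Qed.
Lemma spinmqM u v : spinmq u -> spinmq v -> spinq (qmul u v).
Proof.
case: u v => a b c d [a' b' c' d'] [/= -> ->] [/= -> ->].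
by rewrite /spinq /spinmq /=; split; ring.
Qed.
Lemma spinq_spinmqM u v : spinq u -> spinmq v -> spinmq (qmul u v).
Proof.
case: u v => a b c d [a' b' c' d'] [/= -> ->] [/= -> ->].
by rewrite /spinq /spinmq /=; split; ring.
Qed.
Lemma spinmq_spinqM u v : spinmq u -> spinq v -> spinmq (qmul u v).
Proof.
case: u v => a b c d [a' b' c' d'] [/= -> ->] [/= -> ->].
by rewrite /spinq /spinmq /=; split; ring.
Qed.

Lemma pinq1 : pinq qone. Proof. by left. Qed.
Lemma pinq_conj v : pinq v -> pinq (qconj v).
Proof. by case=> h; [left; apply: spinq_conj | right; apply: spinmq_conj]. Qed.
Lemma pinqM u v : pinq u -> pinq v -> pinq (qmul u v).
Proof.
case=> hu [] hv; [left; exact: spinqM | right; exact: spinq_spinmqM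
  | right; exact: spinmq_spinqM | left; exact: spinmqM].
Qed.

Lemma align_axis w : qre w = 0 -> 0 < qnorm2 w ->
  exists h, qnorm2 h = 1 /\
    (forall v, vcross v w = qzero -> spinq (qconjby h v)) /\
    (forall v, qre v = 0 -> vdot v w = 0 -> spinmq (qconjby h v)).
Proof.
case: w => _ b c d /= -> Wpos; set W := _ + _ in Wpos.
(* Conjugation by the pure quaternion n = w + s j with |s| = |w| is the half-turn
   about w + s j, which swaps the directions of w and j; the sign of s keeps
   n away from 0. *)
pose s := if 0 <= c then Num.sqrt W else - Num.sqrt W.
have s2 : s ^+ 2 = W by rewrite /s; case: ifP => _; rewrite ?sqrrN sqr_sqrtr // ltW.
have cs_ge0 : 0 <= c * s.
  rewrite /s; case: ifPn => [c0|]; first by rewrite mulr_ge0 ?sqrtr_ge0.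
  by rewrite -ltNge mulrN -mulNr => c0; rewrite mulr_ge0 ?sqrtr_ge0 // oppr_ge0 ltW.
pose n := Quat 0 b (c + s) d.
have n2E : qnorm2 n = 2 * (W + c * s).
  transitivity (2 * (W + c * s) + (s ^+ 2 - W)); first by rewrite /W /=; ring.
  by rewrite s2 subrr addr0.
have n2pos : 0 < qnorm2 n by rewrite n2E mulr_gt0 // ltr_wpDr.
pose l := (Num.sqrt (qnorm2 n))^-1.
have l2 : l ^+ 2 * qnorm2 n = 1 by rewrite exprVn sqr_sqrtr ?ltW // mulVf // gt_eqF.
exists (qscale l n); split; first by rewrite qnorm2_scale.
split=> v.
- move=> vw; rewrite qconjby_scale qconjby_pure //; apply: spinq_scale.
  move: v vw => [a' b' c' d'] [e1 e2 e3]; rewrite /spinq /vdot n2E /=; split.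
  + transitivity (2 * (d * (d' * b - b' * d) - (c + s) * (b' * c - c' * b)));
      first by rewrite /W; ring.
    by rewrite e2 e3; ring.
  + transitivity (2 * ((c + s) * (c' * d - d' * c) - b * (d' * b - b' * d)));
      first by rewrite /W; ring.
    by rewrite e1 e2; ring.
- move=> v0 vw; rewrite qconjby_scale qconjby_pure //; apply: spinmq_scale.
  move: v v0 vw => [a' b' c' d'] a0 vw; rewrite /spinmq /vdot n2E /=.
  rewrite /vdot /= in a0 vw; rewrite a0.
  split; first by rewrite mulr0.
  transitivity (2 * (b' * b + c' * c + d' * d) * (c + s) + 2 * c' * (s ^+ 2 - W));
    first by rewrite /W; ring.
  by rewrite vw s2; ring.
Qed.

Definition qim (p : quat) := Quat 0 (qi p) (qj p) (qk p).

Lemma qim_eq0 p : qnorm2 (qim p) = 0 -> [/\ qi p = 0, qj p = 0 & qk p = 0].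
Proof. by move/qnorm2_eq0; case: p => a b c d [-> -> ->]. Qed.

Lemma common_axis u v : vcross u v = qzero ->
  exists w, [/\ qre w = 0, 0 < qnorm2 w, vcross u w = qzero & vcross v w = qzero].
Proof.
case: u v => a b c d [a' b' c' d'] /= [e1 e2 e3]; rewrite /vcross /=.
have [/qim_eq0 [/= -> -> ->]|u0] := eqVneq (qnorm2 (qim (Quat a b c d))) 0.
  have [/qim_eq0 [/= -> -> ->]|v0] := eqVneq (qnorm2 (qim (Quat a' b' c' d'))) 0.
    exists (Quat 0 0 1 0); split=> //=; last by congr Quat; ring.
      by rewrite expr1n expr0n !addr0 add0r ltr01.
    by congr Quat; ring.
  exists (qim (Quat a' b' c' d')); split=> //; first by rewrite lt_def v0 qnorm2_ge0.
    by rewrite /=; congr Quat; ring.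
  by rewrite /=; congr Quat; ring.
exists (qim (Quat a b c d)); split=> //; first by rewrite lt_def u0 qnorm2_ge0.
  by rewrite /=; congr Quat; ring.
by rewrite /=; congr Quat; lra.
Qed.

Definition qclass_in (P : quat -> Prop) (p q : quat) :=
  exists h, [/\ qnorm2 h = 1, P (qconjby h p) & P (qconjby h q)].

Lemma vcross_spinq u v : spinq u -> spinq v -> vcross u v = qzero.
Proof.
case: u v => a b c d [a' b' c' d'] [/= -> ->] [/= -> ->].
by rewrite /vcross /=; congr Quat; ring.
Qed.

Lemma spin_qclassP p q : qnorm2 p = 1 -> qnorm2 q = 1 ->
  qclass_in spinq p q <-> qre (qcomm p q) = 1.
Proof.
move=> pn qn; split.
  case=> h [hn sp sq]; rewrite -(qre_qconjby_unit _ hn) qconjby_comm // qre_comm.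
  by rewrite vcross_spinq // !qnorm2_qconjby hn pn qn; rewrite /=; ring.
rewrite qre_comm pn qn mul1r => k1.
have /qnorm2_eq0/common_axis [w [w0 wpos pw qw]] : qnorm2 (vcross p q) = 0 by lra.
have [h [hn [spin _]]] := align_axis w0 wpos.
by exists h; split=> //; apply: spin.
Qed.

Lemma pure_pair_spinm_qclass p r : qre p = 0 -> qre r = 0 ->
  qre (qcomm p r) != qnorm2 p * qnorm2 r -> qclass_in spinmq p r.
Proof.
move=> p0 r0; rewrite qre_comm -subr_eq0 addrC addKr oppr_eq0 mulf_eq0 pnatr_eq0 /=.
move=> w_ne0; have wpos : 0 < qnorm2 (vcross p r) by rewrite lt_def w_ne0 qnorm2_ge0.
have [h [hn [_ spinm]]] := align_axis (erefl : qre (vcross p r) = 0) wpos.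
exists h; split=> //; apply: spinm => //; rewrite /vdot /=; ring.
Qed.

Lemma qcomm_mulr p q : qcomm p (qmul p q) = qconjby p (qcomm p q).
Proof. by rewrite /qcomm /qconjby qconjM !qmulA. Qed.

Lemma qcomm_mull p q : qnorm2 q = 1 -> qcomm (qmul p q) q = qcomm p q.
Proof.
move=> qn; rewrite /qcomm qconjM !qmulA.
by rewrite -[qmul q (qmul (qconj q) _)]qmulA qmul_conj // qmul1l.
Qed.

Definition two_of_pure p q :=
  (qre p == 0) && (qre q == 0) \/ (qre p == 0) && (qre (qmul p q) == 0) \/
  (qre q == 0) && (qre (qmul p q) == 0).

Lemma two_of_pure_pin_qclass p q : qnorm2 p = 1 -> qnorm2 q = 1 ->
  qre (qcomm p q) != 1 -> two_of_pure p q -> qclass_in pinq p q.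
Proof.
move=> pn qn k1; have pqn : qnorm2 (qmul p q) = 1 by rewrite qnorm2M pn qn mulr1.
case=> [/andP[/eqP p0 /eqP q0]|[/andP[/eqP p0 /eqP pq0]|/andP[/eqP q0 /eqP pq0]]].
- have k1' : qre (qcomm p q) != qnorm2 p * qnorm2 q by rewrite pn qn mulr1.
  have [h [hn sp sq]] := pure_pair_spinm_qclass p0 q0 k1'.
  by exists h; split=> //; right.
- have k1' : qre (qcomm p (qmul p q)) != qnorm2 p * qnorm2 (qmul p q).
    by rewrite qcomm_mulr qre_qconjby_unit // pn pqn mulr1.
  have [h [hn sp spq]] := pure_pair_spinm_qclass p0 pq0 k1'.
  exists h; split=> //; [by right | left].
  have -> : q = qmul (qconj p) (qmul p q) by rewrite -qmulA qmul_conjl // qmul1l.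
  by rewrite qconjbyM // qconjby_conj; apply: spinmqM => //; apply: spinmq_conj.
- have k1' : qre (qcomm (qmul p q) q) != qnorm2 (qmul p q) * qnorm2 q.
    by rewrite qcomm_mull // pqn qn mulr1.
  have [h [hn spq sq]] := pure_pair_spinm_qclass pq0 q0 k1'.
  exists h; split=> //; [left | by right].
  have -> : p = qmul (qmul p q) (qconj q) by rewrite qmulA qmul_conj // qmul1.
  by rewrite qconjbyM // qconjby_conj; apply: spinmqM => //; apply: spinmq_conj.
Qed.

Lemma pin_qclass_two_of_pure p q :
  qclass_in pinq p q -> ~ qclass_in spinq p q -> two_of_pure p q.
Proof.
case=> h [hn hp hq] nspin.
have qre_pure v : spinmq (qconjby h v) -> qre v == 0.
  by case=> v0 _; rewrite -(qre_qconjby_unit v hn) v0.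
have pqE : qconjby h (qmul p q) = qmul (qconjby h p) (qconjby h q) by rewrite qconjbyM.
case: hp hq => [sp|sp] [sq|sq].
- by case: nspin; exists h.
- by right; right; rewrite !qre_pure // pqE; apply: spinq_spinmqM.
- by right; left; rewrite !qre_pure // pqE; apply: spinmq_spinqM.
- by left; rewrite !qre_pure.
Qed.

Lemma pin_not_spin_qclassP p q : qnorm2 p = 1 -> qnorm2 q = 1 ->
  qclass_in pinq p q /\ ~ qclass_in spinq p q <->
  qre (qcomm p q) != 1 /\ two_of_pure p q.
Proof.
move=> pn qn; split=> [[hpin hnspin]|[k1 two]].
  split; last exact: pin_qclass_two_of_pure.
  by apply/eqP => /(spin_qclassP pn qn).
split; first exact: two_of_pure_pin_qclass.
by move/(spin_qclassP pn qn)/eqP; apply/negP.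
Qed.
End Quaternions.

Section MatrixModel.
Variable R : realType.
Local Open Scope complex_scope.

(* [qmx] sends a + b i + c j + d k to a + b qI + c qJ + d qK. *)
Definition qmx (p : quat R) : 'M[R[i]]_2 :=
  let: Quat a b c d := p in
  \matrix_(i < 2, j < 2)
   (if i == 0 :> nat then (if j == 0 :> nat then a +i* b else c +i* d)
    else (if j == 0 :> nat then (- c) +i* d else a +i* (- b))).

Lemma ord2P (i : 'I_2) : i = 0 \/ i = 1.
Proof. by case: i => [[|[|//]] ?]; [left|right]; apply/val_inj. Qed.

Lemma qmxM p q : qmx (qmul p q) = qmx p *m qmx q.
Proof.
case: p q => a b c d [a' b' c' d'].
apply/matrixP => i j; rewrite !mxE !big_ord_recl !big_ord0 !mxE /=.
case: i => [[|[|//]] ?]; case: j => [[|[|//]] ?] /=; simpc; congr (_ +i* _); ring.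
Qed.

Lemma qmx1 : qmx (qone R) = 1%:M.
Proof.
apply/matrixP => i j; rewrite !mxE.
by case: (ord2P i) => ->; case: (ord2P j) => -> /=; simpc.
Qed.

Lemma qmx_inj : injective qmx.
Proof.
case=> a b c d [a' b' c' d'] /matrixP h.
by move: (h 0 0) (h 0 1); rewrite !mxE /= => -[-> ->] [-> ->].
Qed.

Lemma qmxV p : qnorm2 p = 1 -> invmx (qmx p) = qmx (qconj p).
Proof.
move=> pn; have h1 : qmx p *m qmx (qconj p) = 1%:M by rewrite -qmxM qmul_conj // qmx1.
have [pu _] := mulmx1_unit h1.
by rewrite -[RHS](mulKmx pu) h1 mulmx1.
Qed.

Lemma det_qmx p : \det (qmx p) = (qnorm2 p)%:C.
Proof.
case: p => a b c d.
rewrite (expand_det_row _ 0) !big_ord_recl big_ord0 /cofactor !det_mx11 !mxE /=.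
by simpc; rewrite -complexr0; congr (_ +i* _); ring.
Qed.

Lemma adjmx_qmx p : adjmx (qmx p) = qmx (qconj p).
Proof.
have conjE (x : R[i]) : Num.conj x = conjc x by [].
case: p => a b c d; apply/matrixP => i j; rewrite !mxE.
by case: (ord2P i) => ->; case: (ord2P j) => -> /=; rewrite conjE /= ?opprK.
Qed.

Lemma tr_qmx p : \tr (qmx p) = (qre p *+ 2)%:C.
Proof.
case: p => a b c d; rewrite /mxtrace !big_ord_recl big_ord0 !mxE /=.
by simpc; rewrite -complexr0; congr (_ +i* _); ring.
Qed.

Lemma qmx_SU2 p : qnorm2 p = 1 -> SU2 (qmx p).
Proof.
move=> pn; apply/andP; split; first by rewrite adjmx_qmx -qmxM qmul_conj // qmx1.
by rewrite det_qmx pn.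
Qed.

Lemma SU2_qmx A : SU2 A -> exists2 p, qnorm2 p = 1 & A = qmx p.
Proof.
case/andP => /eqP AA /eqP detA.
have adjE : adjmx A = \adj A by rewrite -[LHS]mul1mx -detA -mul_adj_mx -mulmxA AA mulmx1.
have lift01 : lift 0 0 = 1 :> 'I_2 by apply/val_inj.
have lift10 : lift 1 0 = 0 :> 'I_2 by apply/val_inj.
have A11 : A 1 1 = conjc (A 0 0).
  by move/matrixP/(_ 0 0): adjE; rewrite !mxE /cofactor det_mx11 !mxE lift01 mul1r.
have A10 : A 1 0 = - conjc (A 0 1).
  move/matrixP/(_ 1 0): adjE; rewrite !mxE /cofactor det_mx11 !mxE lift01 lift10.
  by rewrite expr1 mulN1r => e; apply/eqP; rewrite -[A 1 0]opprK -e.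
pose p := Quat (complex.Re (A 0 0)) (complex.Im (A 0 0)) (complex.Re (A 0 1)) (complex.Im (A 0 1)).
have Ap : A = qmx p.
  apply/matrixP => i j; rewrite mxE.
  case: (ord2P i) => ->; case: (ord2P j) => -> /=.
  - by case: (A 0 0).
  - by case: (A 0 1).
  - by rewrite A10; case: (A 0 1) => ? ? /=; simpc.
  - by rewrite A11; case: (A 0 0).
by exists p => //; move: detA; rewrite Ap det_qmx => /(congr1 (@complex.Re R)).
Qed.

Lemma unit_circle_cos_sin (c s : R) : c ^+ 2 + s ^+ 2 = 1 ->
  exists t, cos t = c /\ sin t = s.
Proof.
move=> cs1; have c_itv : -1 <= c <= 1 by apply/andP; split; nra.
have sin_acos_c : sin (acos c) = `|s|.
  by rewrite sin_acos // -sqrtr_sqr; congr Num.sqrt; rewrite -cs1; ring.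
have [s_ge0|s_lt0] := lerP 0 s.
  by exists (acos c); rewrite acosK ?in_itv //= sin_acos_c ger0_norm.
by exists (- acos c); rewrite cosN sinN acosK ?in_itv //= sin_acos_c ltr0_norm ?opprK.
Qed.

Lemma Spin2_qmx v : qnorm2 v = 1 -> Spin2 (qmx v) <-> spinq v.
Proof.
have spin2E t : (cos t)%:C%:M + (sin t)%:C *: qJ R = qmx (Quat (cos t) 0 (sin t) 0).
  apply/matrixP => i j; rewrite !mxE.
  by case: (ord2P i) => ->; case: (ord2P j) => -> /=; simpc; rewrite ?mulr1 ?mulr0 ?addr0.
case: v => a b c d vn; split.
  by case=> t; rewrite spin2E => /qmx_inj [_ -> _ ->].
case=> /= b0 d0; have [t [<- <-]] : exists t, cos t = a /\ sin t = c.
  by apply: unit_circle_cos_sin; rewrite -vn /= b0 d0; ring.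
by exists t; rewrite spin2E b0 d0.
Qed.

Lemma Spinm2_qmx v : qnorm2 v = 1 -> Spinm2 (qmx v) <-> spinmq v.
Proof.
have spinm2E t : (cos t)%:C *: qK R + (sin t)%:C *: qI R = qmx (Quat 0 (sin t) 0 (cos t)).
  apply/matrixP => i j; rewrite !mxE.
  by case: (ord2P i) => ->; case: (ord2P j) => -> /=; simpc; rewrite ?mulr1 ?mulr0 ?addr0.
case: v => a b c d vn; split.
  by case=> t; rewrite spinm2E => /qmx_inj [-> _ -> _].
case=> /= a0 c0; have [t [<- <-]] : exists t, cos t = d /\ sin t = b.
  by apply: unit_circle_cos_sin; rewrite -vn /= a0 c0; ring.
by exists t; rewrite spinm2E a0 c0.
Qed.

Lemma Pin2_qmx v : qnorm2 v = 1 -> Pin2 (qmx v) <-> pinq v.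
Proof. by move=> vn; rewrite /Pin2 /pinq Spin2_qmx // Spinm2_qmx. Qed.

Fixpoint qword (p q : quat R) (w : word) : quat R :=
  match w with
  | wX => p | wY => q | w1 => qone R
  | wmul u v => qmul (qword p q u) (qword p q v)
  | winv u => qconj (qword p q u)
  end.

Lemma qnorm2_qword p q w : qnorm2 p = 1 -> qnorm2 q = 1 -> qnorm2 (qword p q w) = 1.
Proof.
move=> pn qn; elim: w => //= [|u IHu v IHv|u IHu]; last by rewrite qnorm2_conj.
  by rewrite expr1n expr0n /= !addr0.
by rewrite qnorm2M IHu IHv mulr1.
Qed.

Lemma rep_eval_qmx p q w : qnorm2 p = 1 -> qnorm2 q = 1 ->
  rep_eval (qmx p) (qmx q) w = qmx (qword p q w).
Proof.
move=> pn qn; elim: w => //= [|u IHu v IHv|u IHu]; first exact: esym qmx1.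
  by rewrite IHu IHv qmxM.
by rewrite IHu qmxV // qnorm2_qword.
Qed.

Lemma qconjby_qword h p q w : qnorm2 h = 1 ->
  qconjby h (qword p q w) = qword (qconjby h p) (qconjby h q) w.
Proof.
move=> hn; elim: w => //= [|u IHu v IHv|u IHu]; first exact: qconjby1.
  by rewrite qconjbyM // IHu IHv.
by rewrite qconjby_conj IHu.
Qed.

Lemma rep_class_in_qmx (G : 'M[R[i]]_2 -> Prop) (P : quat R -> Prop) p q :
  qnorm2 p = 1 -> qnorm2 q = 1 ->
  (forall v, qnorm2 v = 1 -> G (qmx v) <-> P v) ->
  P (qone R) -> (forall u v, P u -> P v -> P (qmul u v)) -> (forall u, P u -> P (qconj u)) ->
  rep_class_in G (qmx p) (qmx q) <-> qclass_in P p q.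
Proof.
move=> pn qn GP P1 PM PC.
have conj_qmx h v : qnorm2 h = 1 -> qmx h *m qmx v *m invmx (qmx h) = qmx (qconjby h v).
  by move=> hn; rewrite qmxV // /qconjby !qmxM.
have unit_qconjby h v : qnorm2 h = 1 -> qnorm2 v = 1 -> qnorm2 (qconjby h v) = 1.
  by move=> hn vn; rewrite qnorm2_qconjby hn vn expr1n mulr1.
split.
  case=> g [/SU2_qmx [h hn ->] Gw]; exists h; split=> //.
    by have := Gw wX; rewrite /= conj_qmx // GP // unit_qconjby.
  by have := Gw wY; rewrite /= conj_qmx // GP // unit_qconjby.
case=> h [hn Pp Pq]; exists (qmx h); split; first exact: qmx_SU2.
move=> w; rewrite rep_eval_qmx // conj_qmx // qconjby_qword // GP.
  by elim: w => /=; auto.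
by apply: qnorm2_qword; apply: unit_qconjby.
Qed.

Lemma tr_qmx_eq0 p : (\tr (qmx p) == 0) = (qre p == 0).
Proof. by rewrite tr_qmx fmorph_eq0 mulrn_eq0. Qed.

Lemma tr_qmx_eq2 p : (\tr (qmx p) == 2) = (qre p == 1).
Proof.
rewrite tr_qmx -(rmorph_nat (real_complex R) 2) fmorph_eq.
by apply/eqP/eqP => h; lra.
Qed.
End MatrixModel.

Theorem proposition3p3 (R : realType) (A B : 'M[R[i]]_2) :
  SU2 A -> SU2 B ->
  let x := \tr A in
  let y := \tr B in
  let z := \tr (A *m B) in
  let k := \tr (rep_eval A B wK) in
  (rep_class_in (@Pin2 R) A B /\ ~ rep_class_in (@Spin2 R) A B) <->
  (k != 2 /\ ((x == 0) && (y == 0) \/ (x == 0) && (z == 0) \/ (y == 0) && (z == 0))).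
Proof.
move=> /SU2_qmx [p pn ->] /SU2_qmx [q qn ->] x y z k; rewrite {}/x {}/y {}/z {}/k.
rewrite -qmxM rep_eval_qmx // tr_qmx_eq2 !tr_qmx_eq0.
rewrite (rep_class_in_qmx pn qn (@Pin2_qmx R) (pinq1 R) (@pinqM R) (@pinq_conj R)).
rewrite (rep_class_in_qmx pn qn (@Spin2_qmx R) (spinq1 R) (@spinqM R) (@spinq_conj R)).
exact: pin_not_spin_qclassP.
Qed.
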